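(* Let $d\ge2$, $D_d=\bigl(\binom{d-j}{d-i}\bigr)_{1\le i,j\le d}$ (with $\binom{r}{s}=0$ for $s<0$ or $s>r$), and let $j$ be an even integer with $2\le j\le d$. Let $D'_d(j)$ be the $j\times j$ submatrix of $D_d$ formed by its first $j$ columns and by rows $1,\dots,\frac j2$ and $d-\frac j2+1,\dots,d$. Then $\det D'_d(j)=1$, so $D'_d(j)^{-1}\in M_{j\times j}(\mathbb Z)$, and the entry of $D'_d(j)^{-1}$ in row $j$ and column $\frac j2$ equals $\pm1$.
   Context: Standard binomial coefficients, with the convention $\binom{r}{s}=0$ for $s<0$ or $s>r$. *)

From HB Require Import structures.
From mathcomp Require Import all_boot all_order all_algebra.
Set Implicit Arguments. Unset Strict Implicit. Unset Printing Implicit Defensive.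
Import Order.TTheory GRing.Theory Num.Theory.
Local Open Scope ring_scope.

(* For 1 <= i,j <= d the
   natural subtractions are exact, and mathcomp's 'C(r,s) = 0 for s > r,
   matching the convention binom(r,s)=0 for s>r (s<0 cannot occur). *)
Definition Dentry (d i j : nat) : int := ('C(d - j, d - i))%:Z.

Definition Dmx (d : nat) : 'M[int]_d :=
  \matrix_(i < d, j < d) Dentry d i.+1 j.+1.

(* 1-based row of D_d selected by the a-th (0-based) row of D'_d(j):
   rows 1..j/2, then d-j/2+1..d. *)
Definition Dsub_row (d j a : nat) : nat :=
  if (a < j./2)%N then a.+1 else (d - j + a).+1.

Definition Dsub (d j : nat) : 'M[int]_j :=
  \matrix_(a < j, b < j) Dentry d (Dsub_row d j a) b.+1.

From HB Require Import structures.
From mathcomp Require Import all_boot all_order all_algebra.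
From mathcomp Require Import zify.
Import Order.TTheory GRing.Theory Num.Theory.
Local Open Scope ring_scope.

(* In D'_d(j), j = 2h, the top h rows [binom(d-b, d-a)] form a
   unitriangular block with zeros to their right, so the determinant is that of
   the bottom-right h x h block [binom(d-2h + h-b, h-a)].  By Vandermonde's
   identity this block is the product of two unitriangular integer matrices,
   hence has determinant 1.  Deleting row h and column j of D'_d(j) gives a
   matrix of exactly the same shape (h-1 top rows, d-2h+1 in place of d-2h), so
   the cofactor giving the requested entry of the inverse is a sign. *)

Lemma det_unitrig_prefix {R : comPzRingType} {n p : nat} {f : nat -> nat -> R} :
  (p <= n)%N ->
  (forall a b, (a < p)%N -> (a < b < n)%N -> f a b = 0) ->
  (forall a, (a < p)%N -> f a a = 1) ->
  \det (\matrix_(a < n, b < n) f a b) =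
  \det (\matrix_(a < n - p, b < n - p) f (p + a)%N (p + b)%N).
Proof.
elim: p n f => [|p IHp] n f le_pn f_upper f_diag; first by rewrite subn0.
case: n le_pn f_upper => // n le_pn f_upper.
rewrite (expand_det_row _ ord0) big_ord_recl big1 ?addr0; last first.
  by move=> b _; rewrite mxE f_upper ?mul0r //= ltnS ltn_ord.
rewrite mxE f_diag // mul1r /cofactor /= expr0 mul1r.
have -> : row' ord0 (col' ord0 (\matrix_(a < n.+1, b < n.+1) f a b)) =
          \matrix_(a < n, b < n) f a.+1 b.+1.
  by apply/matrixP => a b; rewrite !mxE.
rewrite (IHp n (fun a b => f a.+1 b.+1)) //.
- by move=> a b lt_ap lt_abn; apply: f_upper.
- by move=> a lt_ap; apply: f_diag.
Qed.

Lemma Vandermonde_rev m x a b : (a < m)%N -> (b < m)%N ->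
  (\sum_(k < m) (if (a <= k)%N then 'C(x, k - a) else 0) * 'C(m.-1 - b, m.-1 - k))%N
  = 'C(x + (m.-1 - b), m.-1 - a).
Proof.
move=> lt_am lt_bm; rewrite (reindex_inj rev_ord_inj) /=.
set L := (m.-1 - a)%N; set n := (m.-1 - b)%N.
transitivity (\sum_(i < m) if (i < L.+1)%N then 'C(n, i) * 'C(x, L - i) else 0)%N.
  apply: eq_bigr => i _; have := ltn_ord i; rewrite /L => lt_im.
  case: (leqP a (m - i.+1)) => [le_a | lt_a].
    have -> : (i < (m.-1 - a).+1)%N by lia.
    have -> : (m.-1 - (m - i.+1) = i)%N by lia.
    have -> : (m - i.+1 - a = m.-1 - a - i)%N by lia.
    by rewrite mulnC.
  by have -> : (i < (m.-1 - a).+1)%N = false by lia.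
rewrite -big_mkcond -(big_ord_widen _ (fun i => 'C(n, i) * 'C(x, L - i))%N) /L; last lia.
by rewrite binomial.Vandermonde addnC.
Qed.

Lemma det_binomial_mx (R : comPzRingType) x m :
  \det (\matrix_(a < m, b < m) ('C(x + (m.-1 - b), m.-1 - a))%:R : 'M[R]_m) = 1.
Proof.
pose U : 'M[R]_m :=
  \matrix_(a < m, k < m) (if (a <= k)%N then 'C(x, k - a) else 0)%:R.
pose L : 'M[R]_m := \matrix_(k < m, b < m) ('C(m.-1 - b, m.-1 - k))%:R.
have -> : \matrix_(a < m, b < m) ('C(x + (m.-1 - b), m.-1 - a))%:R = U *m L.
  apply/matrixP => a b; rewrite !mxE -Vandermonde_rev // natr_sum.
  by apply: eq_bigr => k _; rewrite !mxE natrM.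
have trig_U : is_trig_mx U^T.
  by apply/is_trig_mxP => i k lt_ik; rewrite !mxE; case: leqP => //; lia.
have trig_L : is_trig_mx L.
  by apply/is_trig_mxP => k b lt_kb; rewrite !mxE bin_small //; have := ltn_ord b; lia.
rewrite det_mulmx -det_tr (det_trig trig_U) (det_trig trig_L).
by rewrite !big1 ?mulr1 // => i _; rewrite !mxE ?leqnn ?subnn ?bin0 ?binn.
Qed.

Lemma invmx_det1 (R : comUnitRingType) n (A : 'M[R]_n) :
  \det A = 1 -> invmx A = \adj A.
Proof. by move=> detA1; rewrite /invmx unitmxE detA1 unitr1 invr1 scale1r. Qed.

(* The first n columns of D_d, at rows 1..p and d-n+p+1..d.  D'_d(2h) is
   Dblock d (2h) h, and deleting its row h and its last column leaves
   Dblock d (2h-1) (h-1). *)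
Definition Dblock (d n p : nat) : 'M[int]_n :=
  \matrix_(a < n, b < n) Dentry d (if (a < p)%N then a.+1 else (d - n + a).+1) b.+1.

Lemma det_Dblock d n p : (p <= n <= d)%N -> \det (Dblock d n p) = 1.
Proof.
case/andP=> le_pn le_nd.
pose row_of a := if (a < p)%N then a.+1 else (d - n + a).+1.
rewrite /Dblock -/row_of.
rewrite (det_unitrig_prefix (f := fun a b => Dentry d (row_of a) b.+1) le_pn); first last.
- by move=> a lt_ap; rewrite /row_of lt_ap /Dentry binn.
- by move=> a b lt_ap /andP[lt_ab lt_bn]; rewrite /row_of lt_ap /Dentry bin_small //; lia.
rewrite -[RHS](det_binomial_mx _ (d - n) (n - p)); congr (\det _).
apply/matrixP => a b; rewrite !mxE /row_of ltnNge leq_addr /= /Dentry natz.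
by have := ltn_ord a; have := ltn_ord b => lt_b lt_a; congr (Posz 'C(_, _)); lia.
Qed.

Lemma Dsub_Dblock d h : Dsub d (h + h) = Dblock d (h + h) h.
Proof.
have half_hh : ((h + h)./2 = h)%N by rewrite addnn doubleK.
by apply/matrixP => a b; rewrite !mxE /Dsub_row half_hh.
Qed.

Lemma Dsub_minor d h (r c : 'I_(h + h)) : (0 < h)%N -> (h + h <= d)%N ->
  nat_of_ord r = (h + h).-1 -> nat_of_ord c = ((h + h)./2).-1 ->
  row' c (col' r (Dsub d (h + h))) = Dblock d (h + h).-1 h.-1.
Proof.
move=> h_gt0 le_hd def_r def_c; apply/matrixP => a b.
have half_hh : ((h + h)./2 = h)%N by rewrite addnn doubleK.
rewrite !mxE /= def_r def_c /Dsub_row half_hh /bump.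
have -> : ((h + h).-1 <= b)%N = false by have := ltn_ord b; lia.
case: (ltnP a h.-1) => [lt_a | le_a]; rewrite !add0n ?add1n.
- by have -> : (a < h)%N by lia.
- have -> : (a.+1 < h)%N = false by lia.
  by congr (Dentry _ _.+1 _); lia.
Qed.

Theorem corollary5p12 (d j : nat) :
  (2 <= d)%N -> ~~ odd j -> (2 <= j)%N -> (j <= d)%N ->
  \det (Dsub d j) = 1 /\
  Dsub d j \in unitmx /\
  (forall r c : 'I_j, nat_of_ord r = j.-1 -> nat_of_ord c = (j./2).-1 ->
     invmx (Dsub d j) r c = 1 \/ invmx (Dsub d j) r c = -1).
Proof.
move=> _ even_j le2j le_jd.
have [h def_j] : exists h, j = (h + h)%N.
  by exists j./2; rewrite addnn -[LHS](odd_double_half j) (negbTE even_j).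
subst j; have h_gt0 : (0 < h)%N by lia.
have detD : \det (Dsub d (h + h)) = 1.
  by rewrite Dsub_Dblock det_Dblock //; apply/andP; split; lia.
split => //; split; first by rewrite unitmxE detD unitr1.
move=> r c def_r def_c.
rewrite invmx_det1 // mxE /cofactor Dsub_minor //.
rewrite det_Dblock; last by apply/andP; split; lia.
by rewrite mulr1 -signr_odd; case: odd; [right | left].
Qed.
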